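(* In the setting below, for $n$ participants, the protocol consisting of the setup phase, Round 1 and Rounds 2–3 is correct, i.e. at the end every participant's balance is $0$ (and the shared address is empty), and, apart from the setup, it uses exactly $3\cdot n$ transactions.
   Context: Setting (Conspiracy Santa). There are $n$ participants $P_1,\dots,P_n$. Expenses are organized in exchange groups (in Conspiracy Santa: for each participant, the other $n-1$ participants form a group, choose a gift for him, one or more of them buy it, and its value is shared equally among the $n-1$ group members). All participants know a fixed upper bound $B$ (a positive integer, in cents) on the value of any gift. Setup phase: in each group every payment is broadcast to the group members, each member computes the in-group share (total paid in the group divided by the number of group members); each participant adds his in-group shares and subtracts his own expenses, obtaining his balance $p_i$, assumed to be an integer number of cents (shares may be unevenly split up to one cent). Thus $\sum_i p_i=0$; $p_i>0$ means $P_i$ owes money, $p_i<0$ means $P_i$ must be reimbursed. Sending $x$ cents decreases the sender's balance by $x$ and increases the receiver's balance by $x$. Participants also create anonymous cryptocurrency addresses, and one shared anonymous address (the piggy bank) whose secret key all participants know. All $x \bmod B$ denote the representative in $\{0,\dots,B-1\}$. Round 1 (private transactions on secure channels): $P_1$ samples $t_1$ uniformly in $\{1,\dots,B\}$, sets $p_1\leftarrow p_1-t_1$ and sends $t_1$ cents to $P_2$, who sets $p_2\leftarrow p_2+t_1$. For $i=2,\dots,n$: $P_i$ sets $t_i=p_i \bmod B$, and if $t_i=0$ sets $t_i=B$; then $p_i\leftarrow p_i-t_i$ and $P_i$ sends $t_i$ cents to $P_{i+1}$ (where $P_{n+1}=P_1$), who adds $t_i$ to his balance. Round 2: every $P_i$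 sends $B$ cents to the shared address and sets $p_i\leftarrow p_i-B$. Round 3: every $P_i$ with $p_i<0$ makes, for each of $-p_i/B$ times, the shared address pay $B$ cents to one of his own (distinct) anonymous addresses, and then sets $p_i\leftarrow 0$. *)

From HB Require Import structures.
From mathcomp Require Import all_boot all_order all_algebra.
Set Implicit Arguments. Unset Strict Implicit. Unset Printing Implicit Defensive.
Import Order.TTheory GRing.Theory Num.Theory.

Local Open Scope ring_scope.

(* Participants P_1..P_n are indexed 0..n-1; P_{n+1} = P_1 is index 0. *)

Inductive tx :=
| Priv of nat & nat & int      (* private transfer: from, to, amount *)
| ToPiggy of nat & int         (* participant pays amount to the shared address *)
| FromPiggy of nat & int.      (* shared address pays amount to (an anonymous
                                  address of) the participant *)

Record state := State {
  bal : nat -> int;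
  piggy : int;        (* content of the shared address *)
  log : seq tx
}.

Definition upd (f : nat -> int) (k : nat) (d : int) : nat -> int :=
  fun m => if m == k then f m + d else f m.

Definition apply_tx (s : state) (x : tx) : state :=
  match x with
  | Priv a b v => State (upd (upd (bal s) a (- v)) b v) (piggy s) (rcons (log s) x)
  | ToPiggy a v => State (upd (bal s) a (- v)) (piggy s + v) (rcons (log s) x)
  | FromPiggy b v => State (upd (bal s) b v) (piggy s - v) (rcons (log s) x)
  end.

Definition t_of (B : nat) (v : int) : int :=
  let r := (v %% B%:Z)%Z in if r == 0 then B%:Z else r.

Definition round1 (n B : nat) (t1 : int) (s : state) : state :=
  foldl (fun s i => apply_tx s (Priv i (i.+1 %% n) (t_of B (bal s i))))
        (apply_tx s (Priv 0 1 t1)) (iota 1 n.-1).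

Definition round2 (n B : nat) (s : state) : state :=
  foldl (fun s i => apply_tx s (ToPiggy i B%:Z)) s (iota 0 n).

Definition round3 (n B : nat) (s : state) : state :=
  foldl (fun s i =>
           let v := bal s i in
           if v < 0 then iter (absz v %/ B)%N (fun s => apply_tx s (FromPiggy i B%:Z)) s
           else s) s (iota 0 n).

Definition init_state (p : nat -> int) : state := State p 0 [::].

Definition protocol (n B : nat) (t1 : int) (p : nat -> int) : state :=
  round3 n B (round2 n B (round1 n B t1 (init_state p))).

(* Setup phase (Conspiracy Santa): pay j i = cents paid by P_i in the group
   for P_j (whose members are all P_i with i <> j).  The in-group share of a
   member is the group total divided by the number n-1 of group members, and
   p_i = (sum of in-group shares of P_i) - (own expenses of P_i). *)
Definition group_total (n : nat) (pay : nat -> nat -> nat) (j : nat) : nat :=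
  (\sum_(0 <= k < n) pay j k)%N.

Definition setup_balance (n : nat) (pay : nat -> nat -> nat) (i : nat) : rat :=
  \sum_(0 <= j < n | j != i) ((group_total n pay j)%:R / (n.-1)%:R)
  - (\sum_(0 <= j < n) pay j i)%:R.

(* Setup balances sum to 0 and are at most B, since a member's share in each
   of the n-1 groups he belongs to is at most B/(n-1).  Round 1 is a relay:
   every P_i with i >= 2 receives at most B on top of a balance at most B, and
   sends t_i = p_i mod B in {1..B}, so keeps a multiple of B below 2B, i.e. at
   most B.  P_1 ends below 2B as well and, the sum being 0, also on a multiple
   of B.  After Round 2 all balances are nonpositive multiples of B summing to
   -nB, so Round 3 clears them with exactly n withdrawals of B, which empties
   the nB deposited in the shared address. *)

From HB Require Import structures.
From mathcomp Require Import all_boot all_order all_algebra.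
From mathcomp Require Import zify ring.
Import Order.TTheory GRing.Theory Num.Theory.
Local Open Scope ring_scope.

Lemma sum_nat_except (V : zmodType) (F : nat -> V) (n i : nat) : (i < n)%N ->
  \sum_(0 <= j < n | j != i) F j = \sum_(0 <= j < n) F j - F i.
Proof.
by move=> ltin; rewrite (bigD1_seq i) ?mem_index_iota ?iota_uniq //= addrC addrK.
Qed.

Lemma sum_nat_except_all (V : zmodType) (F : nat -> V) (n : nat) :
  \sum_(0 <= i < n) \sum_(0 <= j < n | j != i) F j = (\sum_(0 <= j < n) F j) *+ n.-1.
Proof.
case: n => [|n]; first by rewrite !big_geq.
rewrite (eq_big_nat _ _ (F2 := fun i => \sum_(0 <= j < n.+1) F j - F i)).
  by rewrite sumrB sumr_const_nat subn0 mulrSr addrK.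
by move=> i /andP[_ ltin]; rewrite sum_nat_except.
Qed.

Section Setup.
Variables (n : nat) (pay : nat -> nat -> nat).
Hypothesis lt1n : (1 < n)%N.

Let n1_neq0 : (n.-1)%:R != 0 :> rat.
Proof. by rewrite pnatr_eq0 -lt0n -ltnS prednK // ltnW. Qed.

Lemma sum_setup_balance : \sum_(0 <= i < n) setup_balance n pay i = 0.
Proof.
rewrite sumrB sum_nat_except_all -mulr_suml -[_ *+ n.-1]mulr_natr divfK //.
by rewrite -!natr_sum exchange_big subrr.
Qed.

Lemma setup_balance_le (B : nat) i : (i < n)%N ->
  (forall j, (j < n)%N -> (group_total n pay j <= B)%N) ->
  setup_balance n pay i <= B%:R.
Proof.
move=> ltin leGB; rewrite /setup_balance lerBlDr ler_wpDr //.
apply: (@le_trans _ _ (\sum_(0 <= j < n | j != i) (B%:R / (n.-1)%:R : rat))).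
  rewrite big_nat_cond [leRHS]big_nat_cond; apply: ler_sum => j /andP[/andP[_ ltjn] _].
  by apply: ler_wpM2r; rewrite ?invr_ge0 // ler_nat leGB.
rewrite sum_nat_except // sumr_const_nat subn0 -(prednK (ltnW lt1n)) mulrSr addrK.
by rewrite -[_ *+ n.-1]mulr_natr divfK.
Qed.

End Setup.

Section Relay.
Variable B : nat.
Hypothesis B_gt0 : (0 < B)%N.

Lemma t_of_bounds v : 1 <= t_of B v <= B%:Z.
Proof. by rewrite /t_of; case: eqP; lia. Qed.

Lemma dvdz_sub_t_of v : (B%:Z %| v - t_of B v)%Z.
Proof.
apply/dvdzP; rewrite /t_of {1}(intdiv.divz_eq v B); case: eqP => [-> | _].
  by exists (divz v B - 1); ring.
by exists (divz v B); ring.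
Qed.

Lemma dvdz_le_of_lt_double x : (B%:Z %| x)%Z -> x < 2 * B%:Z -> x <= B%:Z.
Proof.
have B_pos : 0 < B%:Z by rewrite ltz_nat.
by case/dvdzP=> q ->; rewrite ltr_pM2r // -[leRHS]mul1r ler_pM2r //; lia.
Qed.

Lemma sub_t_of_le v : v <= 2 * B%:Z -> v - t_of B v <= B%:Z.
Proof.
move=> le_v2B; apply: dvdz_le_of_lt_double; first exact: dvdz_sub_t_of.
by have := t_of_bounds v; lia.
Qed.

End Relay.

Lemma updE (f : nat -> int) k d m : upd f k d m = f m + (if m == k then d else 0).
Proof. by rewrite /upd; case: eqP; rewrite ?addr0. Qed.

Lemma sum_upd (f : nat -> int) n k d : (k < n)%N ->
  \sum_(0 <= j < n) upd f k d j = \sum_(0 <= j < n) f j + d.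
Proof.
move=> ltkn; under eq_bigr do rewrite updE.
rewrite big_split /=; congr (_ + _).
rewrite (bigD1_seq k) ?mem_index_iota ?iota_uniq //= eqxx.
by rewrite big1 ?addr0 // => j /negbTE ->.
Qed.

Lemma bal_priv s a b v m :
  bal (apply_tx s (Priv a b v)) m
  = bal s m - (if m == a then v else 0) + (if m == b then v else 0).
Proof. by rewrite /= !updE; case: (m == a); rewrite ?subr0 ?addr0. Qed.

Lemma size_log_apply_tx s x : size (log (apply_tx s x)) = (size (log s)).+1.
Proof. by case: x => *; apply: size_rcons. Qed.

Lemma size_log_foldl (T : Type) (f : state -> T -> state) s r :
  (forall s x, size (log (f s x)) = (size (log s)).+1) ->
  size (log (foldl f s r)) = (size (log s) + size r)%N.
Proof. by move=> fS; elim: r s => [|x r IHr] s /=; rewrite ?addn0 // IHr fS addnS. Qed.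

Lemma foldl_inv (S : Type) (T : eqType) (P : S -> Prop) (f : S -> T -> S) s r :
  (forall s x, x \in r -> P s -> P (f s x)) -> P s -> P (foldl f s r).
Proof.
elim: r s => [|x r IHr] s //= Pf Ps; apply: IHr => [y s' ry|]; last by apply: Pf; rewrite ?inE ?eqxx.
by apply: Pf; rewrite inE ry orbT.
Qed.

Lemma sum_bal_priv n s a b v : (a < n)%N -> (b < n)%N ->
  \sum_(0 <= j < n) bal (apply_tx s (Priv a b v)) j = \sum_(0 <= j < n) bal s j.
Proof. by move=> ltan ltbn; rewrite /= !sum_upd // addrNK. Qed.

Definition relay (n B : nat) (s : state) (i : nat) : state :=
  apply_tx s (Priv i (i.+1 %% n) (t_of B (bal s i))).

Section Round1.
Variables n B : nat.
Hypotheses (lt1n : (1 < n)%N) (B_gt0 : (0 < B)%N).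

(* The state after P_1's payment and the relays of participants 1..k (0-based):
   these have settled on multiples of B, the next relayer holds at most 2B,
   and P_1 still awaits the payment closing the cycle. *)
Definition relay_inv (k : nat) (s : state) : Prop :=
  [/\ forall j, (0 < j <= k)%N -> (B%:Z %| bal s j)%Z /\ bal s j <= B%:Z,
      forall j, (k.+1 < j < n)%N -> bal s j <= B%:Z,
      (k.+1 < n)%N -> bal s k.+1 <= 2 * B%:Z /\ bal s 0 < B%:Z
    & bal s 0 < 2 * B%:Z].

Lemma relay_inv_start s t1 : (forall j, (j < n)%N -> bal s j <= B%:Z) ->
  1 <= t1 <= B%:Z -> relay_inv 0 (apply_tx s (Priv 0 1 t1)).
Proof.
move=> le_balB t1_bounds.
have le0 := le_balB 0%N (ltnW lt1n); have le1 := le_balB 1%N lt1n.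
split=> [j|j /andP[lt1j ltjn]|_|]; rewrite ?bal_priv /=; try lia.
have /negbTE -> : j != 0%N by lia.
have /negbTE -> : j != 1%N by lia.
by rewrite subr0 addr0 le_balB.
Qed.

Lemma relay_inv_step k s : (k.+2 <= n)%N -> relay_inv k s ->
  relay_inv k.+1 (relay n B s k.+1).
Proof.
move=> lt_k1n [done_ok todo_le /(_ lt_k1n)[le_next lt_bal0] _].
set t := t_of B (bal s k.+1); set tgt := (k.+2 %% n)%N; set s' := relay n B s k.+1.
have tgtE : tgt = if (k.+2 < n)%N then k.+2 else 0%N.
  by rewrite /tgt; case: ltnP => [/modn_small | le_nk2] //; rewrite (@anti_leq k.+2 n) ?modnn ?lt_k1n.
have bal'E j : bal s' j = bal s j - (if j == k.+1 then t else 0) + (if j == tgt then t else 0).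
  exact: bal_priv.
have ne_tgt j : (0 < j <= k.+1)%N || (k.+2 < j)%N -> j != tgt.
  by rewrite tgtE; case: (ltnP k.+2 n) => _ ?; apply/eqP; lia.
have other j : j != k.+1 -> j != tgt -> bal s' j = bal s j.
  by move=> /negbTE jk /negbTE jt; rewrite bal'E jk jt subr0 addr0.
have le_kept := sub_t_of_le _ B_gt0 _ le_next.
have t_bounds : 1 <= t <= B%:Z := t_of_bounds _ B_gt0 _.
split.
- move=> j /andP[j_gt0 le_jk1]; case: (eqVneq j k.+1) => [-> | ne_jk1].
    by rewrite bal'E eqxx (negbTE (ne_tgt _ _)) ?addr0 ?leqnn ?dvdz_sub_t_of.
  by rewrite other ?ne_tgt ?j_gt0 ?le_jk1 //; apply: done_ok; lia.
- move=> j /andP[lt_k2j lt_jn]; rewrite other ?ne_tgt ?lt_k2j ?orbT //.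
    by apply: todo_le; lia.
  by apply/eqP; lia.
- move=> lt_k2n; have tgtk2 : tgt = k.+2 by rewrite tgtE lt_k2n.
  rewrite [bal s' 0]other ?tgtk2 //; split; last exact: lt_bal0.
  rewrite -tgtk2 bal'E eqxx tgtk2 ifN; last by apply/eqP; lia.
  by have := todo_le k.+2; rewrite ltnSn lt_k2n => /(_ isT); lia.
- by rewrite bal'E /=; case: (0 == tgt)%N; lia.
Qed.

Lemma relay_inv_foldl k s : (k < n)%N -> relay_inv 0 s ->
  relay_inv k (foldl (relay n B) s (iota 1 k)).
Proof.
elim: k => [|k IHk] lt_kn inv0 //.
rewrite -[X in iota 1 X]addn1 iotaD foldl_cat add1n.
by apply: relay_inv_step => //; apply: IHk => //; apply: ltnW.
Qed.

Lemma relay_inv_last s : relay_inv n.-1 s -> \sum_(0 <= j < n) bal s j = 0 ->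
  forall j, (j < n)%N -> (B%:Z %| bal s j)%Z /\ bal s j <= B%:Z.
Proof.
move=> [done_ok _ _ lt_bal0] sum0.
have dvd_rest : (B%:Z %| \sum_(1 <= j < n) bal s j)%Z.
  rewrite big_nat_cond; apply: rpred_sum => j /andP[/andP[j_gt0 lt_jn] _].
  by have /done_ok[] : (0 < j <= n.-1)%N by lia.
have dvd_bal0 : (B%:Z %| bal s 0)%Z.
  by move: sum0; rewrite big_ltn ?(ltnW lt1n) // => /eqP; rewrite addr_eq0 => /eqP ->; rewrite rpredN.
case=> [|j] lt_jn; first by split; last exact: dvdz_le_of_lt_double.
by apply: done_ok; lia.
Qed.

Lemma round1_conservation t1 s :
  \sum_(0 <= j < n) bal (round1 n B t1 s) j = \sum_(0 <= j < n) bal s j /\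
  piggy (round1 n B t1 s) = piggy s.
Proof.
have lt0n := ltnW lt1n.
pose conserved s' := \sum_(0 <= j < n) bal s' j = \sum_(0 <= j < n) bal s j /\ piggy s' = piggy s.
apply: (@foldl_inv _ _ conserved) => [s' i | ]; last by rewrite /conserved sum_bal_priv.
rewrite mem_iota add1n prednK // => /andP[_ lt_in] [sum_s' piggy_s'].
by split; rewrite // /relay sum_bal_priv ?ltn_pmod.
Qed.

Lemma size_log_round1 t1 s : size (log (round1 n B t1 s)) = (size (log s) + n)%N.
Proof.
rewrite size_log_foldl => [|s' i]; rewrite size_log_apply_tx //.
by rewrite size_iota addSnnS prednK // ltnW.
Qed.

Lemma round1_bal t1 s : 1 <= t1 <= B%:Z ->
  (forall j, (j < n)%N -> bal s j <= B%:Z) -> \sum_(0 <= j < n) bal s j = 0 ->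
  forall j, (j < n)%N -> (B%:Z %| bal (round1 n B t1 s) j)%Z /\ bal (round1 n B t1 s) j <= B%:Z.
Proof.
move=> t1_bounds le_balB sum0; apply: relay_inv_last.
  have inv0 := relay_inv_start s t1 le_balB t1_bounds.
  have lt_n1n : (n.-1 < n)%N by rewrite ltn_predL ltnW.
  exact: relay_inv_foldl lt_n1n inv0.
by rewrite (round1_conservation t1 s).1.
Qed.

End Round1.

Definition deposit (B : nat) (s : state) (i : nat) : state := apply_tx s (ToPiggy i B%:Z).

Lemma foldl_deposit B s r :
  (forall j, bal (foldl (deposit B) s r) j = bal s j - B%:Z *+ count_mem j r) /\
  piggy (foldl (deposit B) s r) = piggy s + B%:Z *+ size r.
Proof.
elim: r s => [|i r IHr] s /=; first by split=> [j|]; rewrite ?subr0 ?addr0.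
have [balE piggyE] := IHr (deposit B s i).
split=> [j|]; rewrite ?balE ?piggyE /= ?updE; last by rewrite mulrS addrA.
rewrite mulrnDr [i == j]eq_sym.
by case: (j == i); rewrite ?mulr1n ?mulr0n ?addr0 ?add0r ?opprD ?addrA.
Qed.

Section Round2.
Variables n B : nat.

Lemma round2_bal s j : (j < n)%N -> bal (round2 n B s) j = bal s j - B%:Z.
Proof.
by move=> lt_jn; rewrite (foldl_deposit B s (iota 0 n)).1 count_uniq_mem ?iota_uniq // mem_iota lt_jn.
Qed.

Lemma piggy_round2 s : piggy (round2 n B s) = piggy s + B%:Z *+ n.
Proof. by rewrite (foldl_deposit B s (iota 0 n)).2 size_iota. Qed.

Lemma size_log_round2 s : size (log (round2 n B s)) = (size (log s) + n)%N.
Proof. by rewrite size_log_foldl ?size_iota // => s' i; apply: size_log_apply_tx. Qed.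

End Round2.

Definition refund (B : nat) (s : state) (i : nat) : state :=
  let v := bal s i in
  if v < 0 then iter (absz v %/ B)%N (fun s => apply_tx s (FromPiggy i B%:Z)) s else s.

Lemma iter_from_piggy B i m s :
  let s' := iter m (fun s => apply_tx s (FromPiggy i B%:Z)) s in
  [/\ forall j, bal s' j = bal s j + (if j == i then B%:Z *+ m else 0),
      piggy s' = piggy s - B%:Z *+ m
    & size (log s') = (size (log s) + m)%N].
Proof.
elim: m => [|m [balE piggyE sizeE]] /=.
  by split=> [j||]; rewrite ?if_same ?addr0 ?subr0 ?addn0.
split=> [j||]; rewrite ?updE ?balE ?piggyE ?size_rcons ?sizeE ?addnS // mulrS.
  by case: (j == i); rewrite ?addr0 // -addrA [B%:Z + _]addrC.
by rewrite [B%:Z + _]addrC opprD addrA.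
Qed.

Lemma mulrn_divn_abs B v : (B%:Z %| v)%Z -> v <= 0 -> B%:Z *+ (`|v| %/ B) = - v.
Proof.
move=> dvd_Bv v_le0; rewrite -mulr_natr natz -PoszM mulnC divnK; last by rewrite dvdzE in dvd_Bv.
by rewrite abszE ler0_norm.
Qed.

Lemma refund_spec B s i : (B%:Z %| bal s i)%Z -> bal s i <= 0 ->
  [/\ forall j, bal (refund B s i) j = if j == i then 0 else bal s j,
      piggy (refund B s i) = piggy s + bal s i
    & size (log (refund B s i)) = (size (log s) + `|bal s i| %/ B)%N].
Proof.
move=> dvd_B bal_le0; rewrite /refund; case: ltrP => [bal_lt0 | bal_ge0]; last first.
  have bal0 : bal s i = 0 by apply/eqP; rewrite eq_le bal_le0 bal_ge0.
  by rewrite bal0 addr0 div0n addn0; split=> // j; case: eqP => [->|].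
have [balE piggyE sizeE] := iter_from_piggy B i (`|bal s i| %/ B) s.
rewrite mulrn_divn_abs // in balE piggyE.
split=> [j||] //; last by rewrite opprK in piggyE.
by rewrite balE; case: eqP => [->|]; rewrite ?addrN ?addr0.
Qed.

Lemma foldl_refund B s r : uniq r ->
  (forall j, j \in r -> (B%:Z %| bal s j)%Z /\ bal s j <= 0) ->
  let s' := foldl (refund B) s r in
  [/\ forall j, bal s' j = if j \in r then 0 else bal s j,
      piggy s' = piggy s + \sum_(j <- r) bal s j
    & size (log s') = (size (log s) + \sum_(j <- r) `|bal s j| %/ B)%N].
Proof.
elim: r s => [|i r IHr] s /=; first by split; rewrite ?big_nil ?addr0 ?addn0.
case/andP=> i_notin_r uniq_r refundable.
have [dvd_i le0_i] := refundable i (mem_head i r).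
have [bal1 piggy1 size1] := refund_spec B s i dvd_i le0_i.
have same j : j \in r -> bal (refund B s i) j = bal s j.
  by move=> jr; rewrite bal1; case: eqP => // ji; rewrite -ji jr in i_notin_r.
have [|balE piggyE sizeE] := IHr (refund B s i) uniq_r.
  by move=> j jr; rewrite same //; apply: refundable; rewrite inE jr orbT.
rewrite !big_cons; split.
- by move=> j; rewrite balE bal1 inE; case: (j \in r); rewrite ?orbT ?orbF.
- by rewrite piggyE piggy1 (eq_big_seq _ same) addrA.
- rewrite sizeE size1 -addnA; congr (_ + (_ + _))%N.
  by apply: eq_big_seq => j /same ->.
Qed.

Lemma sum_mulrn_divn_abs B (b : nat -> int) r :
  (forall j, j \in r -> (B%:Z %| b j)%Z /\ b j <= 0) ->
  B%:Z *+ (\sum_(j <- r) `|b j| %/ B) = - \sum_(j <- r) b j.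
Proof.
move=> refundable; rewrite -sumrMnr -sumrN; apply: eq_big_seq => j jr.
by have [] := refundable j jr; apply: mulrn_divn_abs.
Qed.

Lemma round3_spec n B s :
  (forall j, (j < n)%N -> (B%:Z %| bal s j)%Z /\ bal s j <= 0) ->
  let s' := round3 n B s in
  [/\ forall j, (j < n)%N -> bal s' j = 0,
      piggy s' = piggy s + \sum_(0 <= j < n) bal s j
    & size (log s') = (size (log s) + \sum_(0 <= j < n) `|bal s j| %/ B)%N].
Proof.
move=> refundable; rewrite /index_iota subn0.
have [|balE -> ->] := @foldl_refund B s (iota 0 n) (iota_uniq 0 n).
  by move=> j; rewrite mem_iota => /refundable.
by split=> // j lt_jn; rewrite balE mem_iota lt_jn.
Qed.

Lemma setup_balance_int n B pay (p : nat -> int) : (1 < n)%N ->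
  (forall j, (j < n)%N -> (group_total n pay j <= B)%N) ->
  (forall i, (i < n)%N -> (p i)%:~R = setup_balance n pay i) ->
  \sum_(0 <= i < n) p i = 0 /\ forall i, (i < n)%N -> p i <= B%:Z.
Proof.
move=> lt1n le_totalB p_setup; split=> [|i lt_in].
  apply: (@intr_inj rat); rewrite rmorph_sum rmorph0 /=.
  by rewrite (eq_big_nat _ _ (F2 := setup_balance n pay)) ?sum_setup_balance.
have := setup_balance_le n pay lt1n B i lt_in le_totalB.
by rewrite -p_setup // -[B%:R]/((B%:Z)%:~R : rat) ler_int.
Qed.

Theorem theorem2 (n B : nat) (pay : nat -> nat -> nat) (p : nat -> int) (t1 : int) :
  (1 < n)%N ->
  (0 < B)%N ->
  (* the receiver of a group is not a member of it *)
  (forall j, (j < n)%N -> pay j j = 0%N) ->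
  (* B bounds the value of every gift *)
  (forall j, (j < n)%N -> (group_total n pay j <= B)%N) ->
  (* the balances computed in the setup phase, assumed integral *)
  (forall i, (i < n)%N -> (p i)%:~R = setup_balance n pay i) ->
  (* t_1 is any value in {1,...,B} *)
  1 <= t1 <= B%:Z ->
  let s := protocol n B t1 p in
  (forall i, (i < n)%N -> bal s i = 0) /\ piggy s = 0 /\ size (log s) = (3 * n)%N.
Proof.
move=> lt1n B_gt0 _ le_totalB p_setup t1_bounds.
have [sum_p le_pB] := setup_balance_int n B pay p lt1n le_totalB p_setup.
set s1 := round1 n B t1 (init_state p); set s2 := round2 n B s1.
have [sum1 piggy1] := round1_conservation n B lt1n t1 (init_state p).
have bal1 := round1_bal n B lt1n B_gt0 t1 (init_state p) t1_bounds le_pB sum_p.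
have refundable j : (j < n)%N -> (B%:Z %| bal s2 j)%Z /\ bal s2 j <= 0.
  move=> lt_jn; have [dvd_B le_B] := bal1 j lt_jn.
  by rewrite round2_bal // rpredB ?dvdzz // subr_le0.
have sum2 : \sum_(0 <= j < n) bal s2 j = - (B%:Z *+ n).
  rewrite (eq_big_nat _ _ (F2 := fun j => bal s1 j - B%:Z)) => [|j /andP[_]]; last exact: round2_bal.
  by rewrite sumrB sum1 sum_p sumr_const_nat subn0 sub0r.
have count3 : (\sum_(0 <= j < n) `|bal s2 j| %/ B)%N = n.
  apply: (@mulrIn _ B%:Z); first by rewrite eqz_nat -lt0n.
  by rewrite sum_mulrn_divn_abs ?sum2 ?opprK // => j; rewrite mem_index_iota => /andP[_ /refundable].
have [bal3 piggy3 size3] := round3_spec n B s2 refundable.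
split=> //; split; first by rewrite piggy3 sum2 piggy_round2 piggy1 add0r subrr.
by rewrite size3 count3 size_log_round2 (size_log_round1 _ _ lt1n) /= add0n !mulSn mul0n addn0 addnA.
Qed.
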